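(* Let $\boldsymbol{A}\in\mathbb{R}^{n\times m}$ have full column rank and rows $\boldsymbol{a}_1,\dots,\boldsymbol{a}_n$. Let $\boldsymbol{b}\in\mathbb{R}^n$ (a vector, not to be confused with the batch size $b$), and let $\boldsymbol{x}_*=\arg\min_{\boldsymbol{x}}\frac12\|\boldsymbol{A}\boldsymbol{x}-\boldsymbol{b}\|_2^2$. Let the batch size $b$ divide $n$, let $d=n/b$, and let $\tau_1,\dots,\tau_d$ be a partition of $\{1,\dots,n\}$ into sets of size $b$. Let $\boldsymbol{A}_{\tau_i}$ and $\boldsymbol{b}_{\tau_i}$ denote the rows of $\boldsymbol{A}$ and the entries of $\boldsymbol{b}$ indexed by $\tau_i$. Let $\|\cdot\|$ be the spectral norm and $\sigma_{\min}(\boldsymbol{A})$ the smallest singular value of $\boldsymbol{A}$. Define $$p(\tau_i)=\frac{b}{2n}+\frac12\cdot\frac{\|\boldsymbol{A}_{\tau_i}\|^2}{\sum_{j=1}^d\|\boldsymbol{A}_{\tau_j}\|^2}.$$ Fix $\varepsilon>0$ and $\boldsymbol{x}_0$, and let $\varepsilon_0=\|\boldsymbol{x}_0-\boldsymbol{x}_*\|_2^2$. Consider the iteration $$\boldsymbol{x}_{k+1}=\boldsymbol{x}_k-\frac{\gamma}{p(\tau_{i_k})}\sum_{j\in\tau_{i_k}}(\langle\boldsymbol{a}_j,\boldsymbol{x}_k\rangle-b_j)\boldsymbol{a}_j,$$ with batches drawn i.i.d. from $p$ and step size $$\gamma=\frac{\frac14\varepsilon}{\varepsilon\sum_{i=1}^d\|\boldsymbol{A}_{\tau_i}\|^2+d\,\sigma_{\min}^{-2}(\boldsymbol{A})\sum_{i=1}^d\|\boldsymbol{A}_{\tau_i}\|^2\|\boldsymbol{A}_{\tau_i}\boldsymbol{x}_*-\boldsymbol{b}_{\tau_i}\|_2^2}.$$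 Then after $$k=\Big\lceil4\log(2\varepsilon_0/\varepsilon)\Big(\sigma_{\min}^{-2}(\boldsymbol{A})\sum_{i=1}^d\|\boldsymbol{A}_{\tau_i}\|^2+\frac{d\,\sigma_{\min}^{-4}(\boldsymbol{A})\sum_{i=1}^d\|\boldsymbol{A}_{\tau_i}\|^2\|\boldsymbol{A}_{\tau_i}\boldsymbol{x}_*-\boldsymbol{b}_{\tau_i}\|_2^2}{\varepsilon}\Big)\Big\rceil$$ iterations one has $\mathbb{E}^{(p)}\|\boldsymbol{x}_k-\boldsymbol{x}_*\|_2^2\le\varepsilon$.
   Context: $\mathbb{E}^{(p)}$ denotes expectation over the batch indices drawn independently at each iteration according to $p$. *)

From Stdlib Require Import Reals Lra Lia ZArith.
Open Scope R_scope.

Fixpoint rsum (n : nat) (f : nat -> R) : R :=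
  match n with
  | O => 0
  | S n' => rsum n' f + f n'
  end.

(* Vectors in R^m are functions nat -> R (coordinates 0..m-1);
   an n x m matrix is A : nat -> nat -> R, A j l = entry (row j, column l). *)

Definition rowdot (m : nat) (A : nat -> nat -> R) (j : nat) (x : nat -> R) : R :=
  rsum m (fun l => A j l * x l).

Definition nrm2 (m : nat) (x : nat -> R) : R := rsum m (fun l => x l ^ 2).

Definition full_column_rank (n m : nat) (A : nat -> nat -> R) : Prop :=
  forall x : nat -> R,
    (forall j, (j < n)%nat -> rowdot m A j x = 0) ->
    forall l, (l < m)%nat -> x l = 0.

Definition is_lsq_minimizer (n m : nat) (A : nat -> nat -> R) (bv : nat -> R)
    (xs : nat -> R) : Prop :=
  forall x : nat -> R,
    / 2 * rsum n (fun j => (rowdot m A j xs - bv j) ^ 2)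
    <= / 2 * rsum n (fun j => (rowdot m A j x - bv j) ^ 2).

Definition is_eigval_AtA (n m : nat) (A : nat -> nat -> R) (lam : R) : Prop :=
  exists v : nat -> R,
    (exists l, (l < m)%nat /\ v l <> 0) /\
    forall l, (l < m)%nat ->
      rsum n (fun j => A j l * rowdot m A j v) = lam * v l.

Definition is_sigma_min (n m : nat) (A : nat -> nat -> R) (s : R) : Prop :=
  0 <= s /\ is_eigval_AtA n m A (s ^ 2) /\
  forall lam, is_eigval_AtA n m A lam -> s ^ 2 <= lam.

Definition is_block_spectral_norm (n m : nat) (A : nat -> nat -> R)
    (g : nat -> nat) (i : nat) (s : R) : Prop :=
  is_lub (fun r => exists x : nat -> R, nrm2 m x = 1 /\
            r = sqrt (rsum n (fun j => if Nat.eqb (g j) i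
                                       then rowdot m A j x ^ 2 else 0))) s.

(* g assigns each row index j < n to its batch g j < d; the batches
   tau_i = { j < n | g j = i } (i < d) have size bsz each, so they
   partition {0..n-1} into d sets of size bsz. *)
Definition is_batch_partition (n d bsz : nat) (g : nat -> nat) : Prop :=
  (forall j, (j < n)%nat -> (g j < d)%nat) /\
  (forall i, (i < d)%nat ->
     length (List.filter (fun j => Nat.eqb (g j) i) (List.seq 0 n)) = bsz).

Definition sgd_step (n m : nat) (A : nat -> nat -> R) (bv : nat -> R)
    (g : nat -> nat) (p : nat -> R) (gamma : R) (i : nat) (x : nat -> R)
    : nat -> R :=
  fun l => x l - gamma / p i *
    rsum n (fun j => if Nat.eqb (g j) i
                     then (rowdot m A j x - bv j) * A j l else 0).

Fixpoint sgd_iter (n m : nat) (A : nat -> nat -> R) (bv : nat -> R)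
    (g : nat -> nat) (p : nat -> R) (gamma : R) (x0 : nat -> R)
    (s : nat -> nat) (k : nat) : nat -> R :=
  match k with
  | O => x0
  | S k' => sgd_step n m A bv g p gamma (s k')
              (sgd_iter n m A bv g p gamma x0 s k')
  end.

(* Expectation E^(p) of F over the first k batch indices, drawn i.i.d.
   from the distribution p on {0..d-1}. F should depend only on s 0..s (k-1). *)
Definition scons (i : nat) (s : nat -> nat) : nat -> nat :=
  fun t => match t with O => i | S t' => s t' end.

Fixpoint expect (d : nat) (p : nat -> R) (k : nat) (F : (nat -> nat) -> R) : R :=
  match k with
  | O => F (fun _ => O)
  | S k' => rsum d (fun i => p i * expect d p k' (fun s => F (scons i s)))
  end.

Definition ceilR (x : R) : Z := (- Int_part (- x))%Z.

From Stdlib Require Import Reals ZArith Lra Lia Classical.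
Open Scope R_scope.

(* Writing e = x - x_*, one step of the weighted batch iteration satisfies
     E ||e'||^2 <= (1 - 2 gamma sigma^2 (1 - 2 gamma S)) ||e||^2 + 4 gamma^2 d W,
   with S = sum_i ||A_tau_i||^2 and W = sum_i ||A_tau_i||^2 ||A_tau_i x_* - b_tau_i||^2.
   The cross term is exact: the expected step direction is A^T (A x - b) = A^T A e by the
   normal equations, and ||A e||^2 >= sigma^2 ||e||^2.  The quadratic term is controlled
   because the mixture p(tau) dominates both ||A_tau||^2 / (2 S) and 1 / (2 d).  Unrolling
   the recursion, the error decays geometrically to the floor eps/2, and the choice of
   gamma and k makes the transient term at most eps/2.
   Since sigma^2 is only given as the least eigenvalue of A^T A, the Rayleigh bound is
   proved by showing that the infimum of the Rayleigh quotient is attained, via Gaussian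
   elimination on positive semidefinite quadratic forms. *)

(** * Finite sums and vectors *)

Lemma rsum_ext n f h : (forall i, (i < n)%nat -> f i = h i) -> rsum n f = rsum n h.
Proof.
  induction n as [|n IH]; intros H; simpl; [reflexivity|].
  rewrite IH by (intros; apply H; lia). now rewrite H by lia.
Qed.

Lemma rsum_plus n f h : rsum n (fun i => f i + h i) = rsum n f + rsum n h.
Proof. induction n; simpl; [lra|]. rewrite IHn. lra. Qed.

Lemma rsum_minus n f h : rsum n (fun i => f i - h i) = rsum n f - rsum n h.
Proof. induction n; simpl; [lra|]. rewrite IHn. lra. Qed.

Lemma rsum_mult_l n a f : rsum n (fun i => a * f i) = a * rsum n f.
Proof. induction n; simpl; [lra|]. rewrite IHn. lra. Qed.

Lemma rsum_mult_r n a f : rsum n (fun i => f i * a) = rsum n f * a.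
Proof. induction n; simpl; [lra|]. rewrite IHn. lra. Qed.

Lemma rsum_const n a : rsum n (fun _ => a) = INR n * a.
Proof. induction n; simpl rsum; [simpl; ring|]. rewrite IHn, S_INR. ring. Qed.

Lemma rsum_zero n f : (forall i, (i < n)%nat -> f i = 0) -> rsum n f = 0.
Proof. intros H. rewrite (rsum_ext n f (fun _ => 0)), rsum_const by auto. ring. Qed.

Lemma rsum_le n f h : (forall i, (i < n)%nat -> f i <= h i) -> rsum n f <= rsum n h.
Proof.
  induction n as [|n IH]; intros H; simpl; [lra|].
  apply Rplus_le_compat; [apply IH; intros; apply H|apply H]; lia.
Qed.

Lemma rsum_nonneg n f : (forall i, (i < n)%nat -> 0 <= f i) -> 0 <= rsum n f.
Proof. intros H. rewrite <- (rsum_zero n (fun _ => 0)) by auto. now apply rsum_le. Qed.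

Lemma rsum_term_le n f l :
  (forall i, (i < n)%nat -> 0 <= f i) -> (l < n)%nat -> f l <= rsum n f.
Proof.
  induction n as [|n IH]; intros H Hl; simpl; [lia|].
  destruct (Nat.eq_dec l n) as [->|Hne].
  - assert (0 <= rsum n f) by (apply rsum_nonneg; intros; apply H; lia). lra.
  - assert (f l <= rsum n f) by (apply IH; [intros; apply H|]; lia).
    assert (0 <= f n) by (apply H; lia). lra.
Qed.

Lemma rsum_swap n m (f : nat -> nat -> R) :
  rsum n (fun i => rsum m (fun j => f i j)) = rsum m (fun j => rsum n (fun i => f i j)).
Proof.
  induction n; simpl; [now rewrite rsum_const, Rmult_0_r|].
  now rewrite IHn, <- rsum_plus.
Qed.

Lemma rsum_delta m l0 f :
  (l0 < m)%nat -> rsum m (fun l => if Nat.eqb l l0 then f l else 0) = f l0.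
Proof.
  induction m as [|m IH]; intros H; simpl; [lia|].
  destruct (Nat.eq_dec l0 m) as [->|Hne].
  - rewrite Nat.eqb_refl, rsum_zero; [ring|]. intros i Hi.
    destruct (Nat.eqb_spec i m); [lia|reflexivity].
  - rewrite IH by lia. destruct (Nat.eqb_spec m l0); [lia|ring].
Qed.

Lemma quadratic_nonneg_discr a b c :
  0 <= a -> (forall t, 0 <= a * t ^ 2 + 2 * b * t + c) -> b ^ 2 <= a * c.
Proof.
  intros Ha Hquad. destruct (Rle_lt_or_eq_dec 0 a Ha) as [Hpos|<-].
  - specialize (Hquad (- b / a)).
    replace (a * (- b / a) ^ 2 + 2 * b * (- b / a) + c) with ((a * c - b ^ 2) / a) in Hquad
      by (field; lra).
    apply (Rmult_le_compat_r a) in Hquad; [|lra].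
    replace ((a * c - b ^ 2) / a * a) with (a * c - b ^ 2) in Hquad by (field; lra). lra.
  - (* the polynomial is affine: it must be constant *)
    destruct (Req_dec b 0) as [->|Hb]; [lra|].
    specialize (Hquad (- (Rabs c + 1) / (2 * b))).
    replace (0 * (- (Rabs c + 1) / (2 * b)) ^ 2 + 2 * b * (- (Rabs c + 1) / (2 * b)) + c)
      with (c - (Rabs c + 1)) in Hquad by (field; lra).
    pose proof (Rle_abs c). lra.
Qed.

Lemma rsum_cauchy_schwarz m f h :
  rsum m (fun l => f l * h l) ^ 2 <= rsum m (fun l => f l ^ 2) * rsum m (fun l => h l ^ 2).
Proof.
  apply quadratic_nonneg_discr; [apply rsum_nonneg; intros; apply pow2_ge_0|].
  intros t.
  replace (_ + _ + _) with (rsum m (fun l => (t * f l + h l) ^ 2)).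
  - apply rsum_nonneg; intros; apply pow2_ge_0.
  - rewrite <- !rsum_mult_r, <- rsum_mult_l, <- rsum_mult_r, <- !rsum_plus.
    apply rsum_ext; intros; ring.
Qed.

Lemma nrm2_ext m x y : (forall l, (l < m)%nat -> x l = y l) -> nrm2 m x = nrm2 m y.
Proof. intros H. apply rsum_ext. intros l Hl. now rewrite H. Qed.

Lemma nrm2_nonneg m x : 0 <= nrm2 m x.
Proof. apply rsum_nonneg; intros; apply pow2_ge_0. Qed.

Lemma nrm2_eq0 m x : nrm2 m x = 0 -> forall l, (l < m)%nat -> x l = 0.
Proof.
  intros H l Hl.
  assert (x l ^ 2 <= nrm2 m x)
    by (apply (rsum_term_le m (fun l => x l ^ 2)); [intros; apply pow2_ge_0|exact Hl]).
  nra.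
Qed.

Lemma nrm2_scal m t x : nrm2 m (fun l => t * x l) = t ^ 2 * nrm2 m x.
Proof. unfold nrm2. rewrite <- rsum_mult_l. apply rsum_ext; intros; ring. Qed.

Lemma nrm2_sub_scal m e v a :
  nrm2 m (fun l => e l - a * v l)
  = nrm2 m e - 2 * a * rsum m (fun l => e l * v l) + a ^ 2 * nrm2 m v.
Proof.
  unfold nrm2. rewrite <- rsum_mult_l, <- rsum_mult_l, <- rsum_minus, <- rsum_plus.
  apply rsum_ext; intros; ring.
Qed.

Lemma nrm2_add_le m x y : nrm2 m (fun l => x l + y l) <= 2 * nrm2 m x + 2 * nrm2 m y.
Proof.
  unfold nrm2. rewrite <- !rsum_mult_l, <- rsum_plus. apply rsum_le. intros l _.
  pose proof (pow2_ge_0 (x l - y l)). nra.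
Qed.

Definition coord_vec (l0 : nat) : nat -> R := fun l => if Nat.eqb l l0 then 1 else 0.

Lemma nrm2_coord_vec m l0 : (l0 < m)%nat -> nrm2 m (coord_vec l0) = 1.
Proof.
  intros Hl0. unfold nrm2, coord_vec.
  transitivity (rsum m (fun l => if Nat.eqb l l0 then 1 else 0)).
  - apply rsum_ext. intros l _. destruct (Nat.eqb l l0); ring.
  - exact (rsum_delta m l0 (fun _ => 1) Hl0).
Qed.

Lemma homogeneous_lower_bound m (F : (nat -> R) -> R) K :
  (forall x y, (forall l, (l < m)%nat -> x l = y l) -> F x = F y) ->
  (forall t x, F (fun l => t * x l) = t ^ 2 * F x) ->
  (forall x, nrm2 m x = 1 -> K <= F x) ->
  forall x, K * nrm2 m x <= F x.
Proof.
  intros Hext Hhom Hunit x.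
  destruct (Rle_lt_or_eq_dec 0 _ (nrm2_nonneg m x)) as [Hpos|H0].
  - set (t := / sqrt (nrm2 m x)).
    assert (Ht : t ^ 2 * nrm2 m x = 1).
    { unfold t. rewrite pow_inv, <- Rsqr_pow2, Rsqr_sqrt by lra. field. lra. }
    assert (HK : K <= t ^ 2 * F x)
      by (rewrite <- Hhom; apply Hunit; rewrite nrm2_scal; exact Ht).
    apply (Rmult_le_compat_r (nrm2 m x)) in HK; [|lra].
    replace (t ^ 2 * F x * nrm2 m x) with (F x * (t ^ 2 * nrm2 m x)) in HK by ring.
    rewrite Ht in HK. lra.
  - rewrite <- H0, (Hext x (fun l => 0 * x l)), Hhom; [right; ring|].
    intros l Hl. rewrite (nrm2_eq0 m x (eq_sym H0) l Hl). ring.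
Qed.

Lemma rowdot_ext m A j x y :
  (forall l, (l < m)%nat -> x l = y l) -> rowdot m A j x = rowdot m A j y.
Proof. intros H. apply rsum_ext. intros l Hl. now rewrite H. Qed.

Lemma rowdot_lin m A j x y t :
  rowdot m A j (fun l => x l + t * y l) = rowdot m A j x + t * rowdot m A j y.
Proof. unfold rowdot. rewrite <- rsum_mult_l, <- rsum_plus. apply rsum_ext; intros; ring. Qed.

Lemma rowdot_sub m A j x y :
  rowdot m A j (fun l => x l - y l) = rowdot m A j x - rowdot m A j y.
Proof. unfold rowdot. rewrite <- rsum_minus. apply rsum_ext; intros; ring. Qed.

Lemma rowdot_scal m A j t x : rowdot m A j (fun l => t * x l) = t * rowdot m A j x.
Proof. unfold rowdot. rewrite <- rsum_mult_l. apply rsum_ext; intros; ring. Qed.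

Lemma rowdot_coord_vec m A j l0 : (l0 < m)%nat -> rowdot m A j (coord_vec l0) = A j l0.
Proof.
  intros Hl0. unfold rowdot, coord_vec.
  transitivity (rsum m (fun l => if Nat.eqb l l0 then A j l else 0)).
  - apply rsum_ext. intros l _. destruct (Nat.eqb l l0); ring.
  - exact (rsum_delta m l0 (A j) Hl0).
Qed.

Lemma rsum_adjoint n m A u y :
  rsum m (fun l => y l * rsum n (fun j => u j * A j l))
  = rsum n (fun j => u j * rowdot m A j y).
Proof.
  rewrite (rsum_ext m _ (fun l => rsum n (fun j => u j * (A j l * y l))))
    by (intros; rewrite Rmult_comm, <- rsum_mult_r; apply rsum_ext; intros; ring).
  rewrite rsum_swap. apply rsum_ext. intros j _. now rewrite rsum_mult_l.
Qed.

Definition batch_sum (n : nat) (g : nat -> nat) (i : nat) (f : nat -> R) : R :=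
  rsum n (fun j => if Nat.eqb (g j) i then f j else 0).

Lemma batch_sum_ext n g i f h : (forall j, f j = h j) -> batch_sum n g i f = batch_sum n g i h.
Proof. intros H. apply rsum_ext. intros j _. now rewrite H. Qed.

Lemma batch_sum_nonneg n g i f : (forall j, 0 <= f j) -> 0 <= batch_sum n g i f.
Proof. intros H. apply rsum_nonneg. intros j _. destruct (Nat.eqb (g j) i); [apply H|lra]. Qed.

Lemma batch_sum_plus n g i f h :
  batch_sum n g i (fun j => f j + h j) = batch_sum n g i f + batch_sum n g i h.
Proof.
  unfold batch_sum. rewrite <- rsum_plus. apply rsum_ext. intros j _.
  destruct (Nat.eqb (g j) i); ring.
Qed.

Lemma batch_sum_mult_l n g i a f : batch_sum n g i (fun j => a * f j) = a * batch_sum n g i f.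
Proof.
  unfold batch_sum. rewrite <- rsum_mult_l. apply rsum_ext. intros j _.
  destruct (Nat.eqb (g j) i); ring.
Qed.

Lemma rsum_batch_sum n d g f :
  (forall j, (j < n)%nat -> (g j < d)%nat) -> rsum d (fun i => batch_sum n g i f) = rsum n f.
Proof.
  intros Hg. unfold batch_sum. rewrite rsum_swap. apply rsum_ext. intros j Hj.
  transitivity (rsum d (fun i => if Nat.eqb i (g j) then f j else 0)).
  - apply rsum_ext. intros i _. now rewrite Nat.eqb_sym.
  - exact (rsum_delta d (g j) (fun _ => f j) (Hg j Hj)).
Qed.

Lemma batch_sum_cauchy_schwarz n g i f h :
  batch_sum n g i (fun j => f j * h j) ^ 2
  <= batch_sum n g i (fun j => f j ^ 2) * batch_sum n g i (fun j => h j ^ 2).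
Proof.
  set (restrict := fun f j => if Nat.eqb (g j) i then f j else 0).
  replace (batch_sum n g i (fun j => f j * h j))
    with (rsum n (fun j => restrict f j * restrict h j)).
  replace (batch_sum n g i (fun j => f j ^ 2)) with (rsum n (fun j => restrict f j ^ 2)).
  replace (batch_sum n g i (fun j => h j ^ 2)) with (rsum n (fun j => restrict h j ^ 2)).
  1: apply rsum_cauchy_schwarz.
  all: apply rsum_ext; intros j _; unfold restrict; destruct (Nat.eqb (g j) i); ring.
Qed.

Lemma batch_adjoint n m A g i u y :
  rsum m (fun l => y l * batch_sum n g i (fun j => u j * A j l))
  = batch_sum n g i (fun j => u j * rowdot m A j y).
Proof.
  set (u' := fun j => if Nat.eqb (g j) i then u j else 0).
  transitivity (rsum m (fun l => y l * rsum n (fun j => u' j * A j l))).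
  - apply rsum_ext. intros l _. f_equal. apply rsum_ext. intros j _.
    unfold u'. destruct (Nat.eqb (g j) i); ring.
  - rewrite rsum_adjoint. apply rsum_ext. intros j _. unfold u'. destruct (Nat.eqb (g j) i); ring.
Qed.

(** * Positive semidefinite quadratic forms *)

Definition symmetric (c : nat -> nat -> R) : Prop := forall l l', c l l' = c l' l.

Definition matvec (m : nat) (c : nat -> nat -> R) (v : nat -> R) : nat -> R :=
  fun l => rsum m (fun l' => c l l' * v l').

Definition bil (m : nat) (c : nat -> nat -> R) (x y : nat -> R) : R :=
  rsum m (fun l => x l * matvec m c y l).

Definition quad (m : nat) (c : nat -> nat -> R) (x : nat -> R) : R := bil m c x x.

Definition nonzero_vec (m : nat) (v : nat -> R) : Prop := exists l, (l < m)%nat /\ v l <> 0.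

Lemma bil_double_sum m c x y :
  bil m c x y = rsum m (fun l => rsum m (fun l' => c l l' * x l * y l')).
Proof.
  apply rsum_ext. intros l _. unfold matvec. rewrite <- rsum_mult_l.
  apply rsum_ext; intros; ring.
Qed.

Lemma bil_comm m c x y : symmetric c -> bil m c x y = bil m c y x.
Proof.
  intros Hs. rewrite !bil_double_sum, rsum_swap.
  apply rsum_ext; intros; apply rsum_ext; intros. rewrite Hs. ring.
Qed.

Lemma matvec_ext m c x y l :
  (forall l', (l' < m)%nat -> x l' = y l') -> matvec m c x l = matvec m c y l.
Proof. intros H. apply rsum_ext. intros l' Hl'. now rewrite H. Qed.

Lemma quad_ext m c x y : (forall l, (l < m)%nat -> x l = y l) -> quad m c x = quad m c y.
Proof.
  intros H. apply rsum_ext. intros l Hl. rewrite H by exact Hl. f_equal. now apply matvec_ext.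
Qed.

Lemma quad_scal m c t x : quad m c (fun l => t * x l) = t ^ 2 * quad m c x.
Proof.
  unfold quad. rewrite !bil_double_sum, <- rsum_mult_l. apply rsum_ext. intros l _.
  rewrite <- rsum_mult_l. apply rsum_ext; intros; ring.
Qed.

Lemma quad_zero m c x : (forall l, (l < m)%nat -> x l = 0) -> quad m c x = 0.
Proof.
  intros H. rewrite (quad_ext m c x (fun l => 0 * x l)), quad_scal; [ring|].
  intros l Hl. rewrite H by exact Hl. ring.
Qed.

Lemma quad_add m c v w t : symmetric c ->
  quad m c (fun l => v l + t * w l) = quad m c v + 2 * t * bil m c w v + t ^ 2 * quad m c w.
Proof.
  intros Hs. unfold quad. rewrite (bil_comm m c w v Hs), !bil_double_sum.
  transitivity (rsum m (fun l =>
      rsum m (fun l' => c l l' * v l * v l') + t * rsum m (fun l' => c l l' * v l * w l')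
      + t * rsum m (fun l' => c l l' * w l * v l')
      + t ^ 2 * rsum m (fun l' => c l l' * w l * w l'))).
  - apply rsum_ext. intros l _. rewrite <- !rsum_mult_l, <- !rsum_plus.
    apply rsum_ext; intros; ring.
  - rewrite !rsum_plus, !rsum_mult_l. rewrite <- (bil_double_sum m c w v), bil_comm, bil_double_sum
      by exact Hs.
    ring.
Qed.

Lemma bil_coord_vec m c l0 y : (l0 < m)%nat -> bil m c (coord_vec l0) y = matvec m c y l0.
Proof.
  intros Hl0. transitivity (rsum m (fun l => if Nat.eqb l l0 then matvec m c y l else 0)).
  - apply rsum_ext. intros l _. unfold coord_vec. destruct (Nat.eqb l l0); ring.
  - exact (rsum_delta m l0 (matvec m c y) Hl0).
Qed.

Lemma quad_S m c x : symmetric c ->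
  quad (S m) c x = quad m c x + 2 * x m * matvec m c x m + c m m * x m ^ 2.
Proof.
  intros Hs. unfold quad. rewrite !bil_double_sum. cbn [rsum]. rewrite rsum_plus.
  assert (Hcol : rsum m (fun l => c l m * x l * x m) = x m * matvec m c x m).
  { unfold matvec. rewrite <- rsum_mult_l. apply rsum_ext. intros. rewrite Hs. ring. }
  assert (Hrow : rsum m (fun l' => c m l' * x m * x l') = x m * matvec m c x m).
  { unfold matvec. rewrite <- rsum_mult_l. apply rsum_ext. intros. ring. }
  rewrite Hcol, Hrow. ring.
Qed.

Definition schur (m : nat) (c : nat -> nat -> R) : nat -> nat -> R :=
  fun l l' => c l l' - c m l * c m l' / c m m.

Lemma schur_symmetric m c : symmetric c -> symmetric (schur m c).
Proof. intros Hs l l'. unfold schur, Rdiv. rewrite (Hs l l'). ring. Qed.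

Lemma quad_schur m c x : quad m (schur m c) x = quad m c x - matvec m c x m ^ 2 / c m m.
Proof.
  unfold quad. rewrite !bil_double_sum. unfold schur.
  transitivity (rsum m (fun l => rsum m (fun l' => c l l' * x l * x l'))
                - / c m m * rsum m (fun l => c m l * x l * matvec m c x m)).
  - rewrite <- rsum_mult_l, <- rsum_minus. apply rsum_ext. intros l _.
    unfold matvec. rewrite <- !rsum_mult_l, <- rsum_minus.
    apply rsum_ext; intros; unfold Rdiv; ring.
  - rewrite rsum_mult_r. unfold matvec, Rdiv. ring.
Qed.

Lemma quad_S_schur m c x : symmetric c -> c m m <> 0 ->
  quad (S m) c x = quad m (schur m c) x + c m m * (x m + matvec m c x m / c m m) ^ 2.
Proof. intros Hs Ha. rewrite quad_S, quad_schur by exact Hs. field. exact Ha. Qed.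

Lemma schur_coercive m c k : symmetric c -> 0 < c m m -> 0 < k ->
  (forall x, k * nrm2 m x <= quad m (schur m c) x) ->
  exists k', 0 < k' /\ forall x, k' * nrm2 (S m) x <= quad (S m) c x.
Proof.
  intros Hs Ha Hk Hcoer.
  set (a := c m m) in *. set (B := rsum m (fun l => c m l ^ 2)).
  assert (HB : 0 <= B) by (apply rsum_nonneg; intros; apply pow2_ge_0).
  set (K := 1 + 2 * B / a ^ 2).
  assert (HK : 1 <= K).
  { assert (0 <= B / a ^ 2) by (apply Rmult_le_pos; [lra|apply Rlt_le, Rinv_0_lt_compat; nra]).
    unfold K. lra. }
  set (k' := Rmin (a / 2) (k / K)).
  assert (Hk'a : k' <= a / 2) by apply Rmin_l.
  assert (Hk'K : k' * K <= k)
    by (apply (Rmult_le_reg_r (/ K)); [apply Rinv_0_lt_compat; lra|];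
        replace (k' * K * / K) with k' by (field; lra); apply Rmin_r).
  exists k'. split; [apply Rmin_glb_lt; [lra|apply Rdiv_lt_0_compat; lra]|].
  intros x. set (N := nrm2 m x). set (beta := matvec m c x m).
  set (y := x m + beta / a).
  assert (HN : 0 <= N) by apply nrm2_nonneg.
  assert (HNS : nrm2 (S m) x = N + x m ^ 2) by reflexivity.
  assert (HCS : beta ^ 2 <= B * N) by apply rsum_cauchy_schwarz.
  assert (Hxm : x m ^ 2 <= 2 * y ^ 2 + 2 * B * N / a ^ 2).
  { replace (x m) with (y - beta / a) by (unfold y; field; lra).
    assert (beta ^ 2 / a ^ 2 <= B * N / a ^ 2)
      by (apply Rmult_le_compat_r; [apply Rlt_le, Rinv_0_lt_compat; nra|exact HCS]).
    replace (2 * B * N / a ^ 2) with (2 * (B * N / a ^ 2)) by (field; lra).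
    pose proof (pow2_ge_0 (y + beta / a)).
    replace ((y - beta / a) ^ 2) with (2 * y ^ 2 + 2 * (beta ^ 2 / a ^ 2) - (y + beta / a) ^ 2)
      by (field; lra).
    lra. }
  rewrite HNS, quad_S_schur; [|exact Hs|exact (Rgt_not_eq _ _ Ha)]. fold a beta y.
  specialize (Hcoer x). fold N in Hcoer.
  assert (Hk'0 : 0 < k') by (apply Rmin_glb_lt; [lra|apply Rdiv_lt_0_compat; lra]).
  assert (k' * (N + x m ^ 2) <= k' * K * N + 2 * k' * y ^ 2).
  { replace (k' * K * N + 2 * k' * y ^ 2) with (k' * (N + 2 * y ^ 2 + 2 * B * N / a ^ 2))
      by (unfold K; field; lra).
    apply Rmult_le_compat_l; lra. }
  assert (k' * K * N <= k * N) by (apply Rmult_le_compat_r; lra).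
  pose proof (pow2_ge_0 y). nra.
Qed.

Definition upd (x : nat -> R) (l0 : nat) (t : R) : nat -> R :=
  fun l => if Nat.eqb l l0 then t else x l.

Lemma upd_lt x l0 t l : (l < l0)%nat -> upd x l0 t l = x l.
Proof. intros H. unfold upd. destruct (Nat.eqb_spec l l0); [lia|reflexivity]. Qed.

Lemma upd_eq x l0 t : upd x l0 t l0 = t.
Proof. unfold upd. now rewrite Nat.eqb_refl. Qed.

(* Induction on the dimension, eliminating the last coordinate by a Schur complement. *)
Lemma psd_null_or_coercive m c : symmetric c -> (forall x, 0 <= quad m c x) ->
  (exists v, nonzero_vec m v /\ quad m c v = 0) \/
  (exists k, 0 < k /\ forall x, k * nrm2 m x <= quad m c x).
Proof.
  revert c. induction m as [|m IH]; intros c Hs Hpsd.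
  { right. exists 1. split; [lra|]. intros x. unfold nrm2, quad, bil. simpl. lra. }
  assert (Hpivot : quad (S m) c (coord_vec m) = c m m).
  { assert (Hlow : forall l, (l < m)%nat -> coord_vec m l = 0)
      by (intros l Hl; unfold coord_vec; destruct (Nat.eqb_spec l m); [lia|reflexivity]).
    rewrite quad_S, quad_zero by assumption. unfold matvec.
    rewrite rsum_zero by (intros; rewrite Hlow by assumption; ring).
    unfold coord_vec. rewrite Nat.eqb_refl. ring. }
  destruct (Rle_lt_or_eq_dec 0 (c m m)) as [Ha|Ha]; [rewrite <- Hpivot; apply Hpsd| |].
  - set (ext := fun x => upd x m (- matvec m c x m / c m m)).
    assert (Hext : forall x, quad (S m) c (ext x) = quad m (schur m c) x).
    { intros x. unfold ext. rewrite quad_S_schur, upd_eq; [|exact Hs|lra].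
      rewrite (quad_ext m _ (upd _ _ _) x), (matvec_ext m c (upd _ _ _) x)
        by (intros; apply upd_lt; lia).
      field. lra. }
    assert (Hpsd' : forall x, 0 <= quad m (schur m c) x) by (intros; rewrite <- Hext; apply Hpsd).
    destruct (IH (schur m c) (schur_symmetric m c Hs) Hpsd')
      as [[v [[l [Hl Hv]] Hq]]|[k [Hk Hcoer]]].
    + left. exists (ext v). split; [|now rewrite Hext].
      exists l. split; [lia|]. unfold ext. now rewrite upd_lt.
    + right. exact (schur_coercive m c k Hs Ha Hk Hcoer).
  - left. exists (coord_vec m). split; [|lra].
    exists m. split; [lia|]. unfold coord_vec. rewrite Nat.eqb_refl. lra.
Qed.

Lemma psd_null_matvec m c v : symmetric c -> (forall x, 0 <= quad m c x) ->
  quad m c v = 0 -> forall l, (l < m)%nat -> matvec m c v l = 0.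
Proof.
  intros Hs Hpsd Hv l Hl. rewrite <- bil_coord_vec by exact Hl.
  assert (bil m c (coord_vec l) v ^ 2 <= quad m c (coord_vec l) * 0).
  { apply quadratic_nonneg_discr; [apply Hpsd|]. intros t.
    pose proof (quad_add m c v (coord_vec l) t Hs).
    pose proof (Hpsd (fun l' => v l' + t * coord_vec l l')).
    lra. }
  nra.
Qed.

Lemma inf_exists {T : Type} (P : T -> Prop) (F : T -> R) b :
  (exists x, P x) -> (forall x, P x -> b <= F x) ->
  exists mu, (forall x, P x -> mu <= F x) /\ (forall e, 0 < e -> exists x, P x /\ F x < mu + e).
Proof.
  intros [x0 Hx0] Hb.
  destruct (completeness (fun r => exists x, P x /\ r = - F x)) as [L [Hub Hlub]].
  - exists (- b). intros r [x [Hx ->]]. specialize (Hb x Hx). lra.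
  - exists (- F x0). now exists x0.
  - exists (- L). split.
    + intros x Hx. assert (- F x <= L) by (apply Hub; now exists x). lra.
    + intros e He. apply NNPP. intros Hnone.
      assert (is_upper_bound (fun r => exists x, P x /\ r = - F x) (L - e)).
      { intros r [x [Hx ->]]. destruct (Rle_or_lt (- F x) (L - e)) as [|Hlt]; [assumption|].
        exfalso. apply Hnone. exists x. split; [exact Hx|lra]. }
      specialize (Hlub _ H). lra.
Qed.

Definition shift_diag (c : nat -> nat -> R) (mu : R) : nat -> nat -> R :=
  fun l l' => c l l' - (if Nat.eqb l l' then mu else 0).

Lemma matvec_shift_diag m c mu v l :
  (l < m)%nat -> matvec m (shift_diag c mu) v l = matvec m c v l - mu * v l.
Proof.
  intros Hl. unfold matvec, shift_diag.
  rewrite <- (rsum_delta m l (fun l' => mu * v l')) by exact Hl. rewrite <- rsum_minus.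
  apply rsum_ext. intros l' _. rewrite (Nat.eqb_sym l l'). destruct (Nat.eqb l' l); ring.
Qed.

Lemma quad_shift_diag m c mu x : quad m (shift_diag c mu) x = quad m c x - mu * nrm2 m x.
Proof.
  unfold quad, bil, nrm2. rewrite <- rsum_mult_l, <- rsum_minus. apply rsum_ext. intros l Hl.
  rewrite matvec_shift_diag by exact Hl. ring.
Qed.

Lemma shift_diag_symmetric c mu : symmetric c -> symmetric (shift_diag c mu).
Proof. intros Hs l l'. unfold shift_diag. now rewrite Hs, Nat.eqb_sym. Qed.

(* mu is the infimum of the Rayleigh quotient: c - mu I is PSD but not coercive. *)
Lemma psd_min_eigenvalue m c : symmetric c -> (0 < m)%nat -> (forall x, 0 <= quad m c x) ->
  exists mu v, nonzero_vec m v /\ (forall l, (l < m)%nat -> matvec m c v l = mu * v l) /\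
    forall x, mu * nrm2 m x <= quad m c x.
Proof.
  intros Hs Hm Hpsd.
  destruct (inf_exists (fun x => nrm2 m x = 1) (quad m c) 0) as [mu [Hlow Happrox]].
  { exists (coord_vec 0). now apply nrm2_coord_vec. }
  { intros; apply Hpsd. }
  assert (Hray : forall x, mu * nrm2 m x <= quad m c x)
    by (apply homogeneous_lower_bound; [apply quad_ext|apply quad_scal|exact Hlow]).
  assert (Hpsd' : forall x, 0 <= quad m (shift_diag c mu) x)
    by (intros x; rewrite quad_shift_diag; specialize (Hray x); lra).
  destruct (psd_null_or_coercive m _ (shift_diag_symmetric c mu Hs) Hpsd')
    as [[v [Hv Hq]]|[k [Hk Hcoer]]].
  - exists mu, v. repeat split; [exact Hv| |exact Hray]. intros l Hl.
    pose proof (psd_null_matvec m _ v (shift_diag_symmetric c mu Hs) Hpsd' Hq l Hl) as H0.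
    rewrite matvec_shift_diag in H0 by exact Hl. lra.
  - exfalso. destruct (Happrox k Hk) as [x [Hx Hlt]].
    specialize (Hcoer x). rewrite quad_shift_diag, Hx in Hcoer. lra.
Qed.

(** * Least squares and row blocks *)

Definition gram (n : nat) (A : nat -> nat -> R) : nat -> nat -> R :=
  fun l l' => rsum n (fun j => A j l * A j l').

Lemma gram_symmetric n A : symmetric (gram n A).
Proof. intros l l'. apply rsum_ext. intros; ring. Qed.

Lemma matvec_gram n m A v l :
  matvec m (gram n A) v l = rsum n (fun j => A j l * rowdot m A j v).
Proof.
  unfold matvec, gram.
  rewrite (rsum_ext m _ (fun l' => rsum n (fun j => A j l * (A j l' * v l'))))
    by (intros; rewrite <- rsum_mult_r; apply rsum_ext; intros; ring).
  rewrite rsum_swap. apply rsum_ext. intros. now rewrite rsum_mult_l.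
Qed.

Lemma quad_gram n m A x : quad m (gram n A) x = nrm2 n (fun j => rowdot m A j x).
Proof.
  unfold quad, bil.
  rewrite (rsum_ext m _ (fun l => x l * rsum n (fun j => rowdot m A j x * A j l)))
    by (intros; rewrite matvec_gram; f_equal; apply rsum_ext; intros; ring).
  rewrite rsum_adjoint. apply rsum_ext. intros; ring.
Qed.

Lemma sigma_min_rayleigh n m A sigma : is_sigma_min n m A sigma ->
  (0 < m)%nat /\ forall x, sigma ^ 2 * nrm2 m x <= nrm2 n (fun j => rowdot m A j x).
Proof.
  intros [_ [[v0 [[l0 [Hl0 _]] _]] Hmin]].
  assert (Hm : (0 < m)%nat) by lia. split; [exact Hm|].
  destruct (psd_min_eigenvalue m (gram n A) (gram_symmetric n A) Hm) as [mu [v [Hv [Heig Hray]]]].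
  { intros x. rewrite quad_gram. apply nrm2_nonneg. }
  assert (sigma ^ 2 <= mu).
  { apply Hmin. exists v. split; [exact Hv|]. intros l Hl. rewrite <- matvec_gram. now apply Heig. }
  intros x. specialize (Hray x). rewrite quad_gram in Hray.
  pose proof (nrm2_nonneg m x). nra.
Qed.

Lemma sigma_min_pos n m A sigma :
  full_column_rank n m A -> is_sigma_min n m A sigma -> 0 < sigma.
Proof.
  intros HA [Hs0 [[v0 [[l0 [Hl0 Hv0]] Heig]] _]].
  destruct (Rle_lt_or_eq_dec 0 sigma Hs0) as [|<-]; [assumption|exfalso].
  assert (Hq : nrm2 n (fun j => rowdot m A j v0) = 0).
  { rewrite <- quad_gram. apply rsum_zero. intros l Hl.
    rewrite matvec_gram, Heig by exact Hl. ring. }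
  apply Hv0, (HA v0); [|exact Hl0]. exact (nrm2_eq0 n _ Hq).
Qed.

Lemma lsq_normal_equations n m A bv xs : is_lsq_minimizer n m A bv xs ->
  forall l, (l < m)%nat -> rsum n (fun j => (rowdot m A j xs - bv j) * A j l) = 0.
Proof.
  intros Hmin l Hl.
  set (B := rsum n (fun j => (rowdot m A j xs - bv j) * A j l)).
  assert (B ^ 2 <= rsum n (fun j => A j l ^ 2) * 0).
  { apply quadratic_nonneg_discr; [apply rsum_nonneg; intros; apply pow2_ge_0|]. intros t.
    (* compare the objective at xs and at xs + t e_l *)
    specialize (Hmin (fun l' => xs l' + t * coord_vec l l')).
    rewrite (rsum_ext n (fun j => (rowdot m A j (fun l' => xs l' + t * coord_vec l l') - bv j) ^ 2)
      (fun j => (rowdot m A j xs - bv j) ^ 2 + (2 * t) * ((rowdot m A j xs - bv j) * A j l)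
                + t ^ 2 * A j l ^ 2)) in Hmin
      by (intros; rewrite rowdot_lin, rowdot_coord_vec by exact Hl; ring).
    rewrite !rsum_plus, !rsum_mult_l in Hmin. fold B in Hmin. lra. }
  nra.
Qed.

Lemma block_spectral_norm_bound n m A g i s :
  (0 < m)%nat -> is_block_spectral_norm n m A g i s ->
  forall x, batch_sum n g i (fun j => rowdot m A j x ^ 2) <= s ^ 2 * nrm2 m x.
Proof.
  intros Hm [Hub _] x.
  set (F := fun x => batch_sum n g i (fun j => rowdot m A j x ^ 2)).
  assert (Hunit : forall x, nrm2 m x = 1 -> - s ^ 2 <= - F x).
  { intros y Hy.
    assert (Hle : sqrt (F y) <= s) by (apply Hub; now exists y).
    assert (HF : 0 <= F y) by (apply batch_sum_nonneg; intros; apply pow2_ge_0).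
    pose proof (sqrt_pos (F y)). rewrite <- (sqrt_sqrt (F y) HF).
    assert (sqrt (F y) * sqrt (F y) <= s * s) by (apply Rmult_le_compat; lra). lra. }
  change (F x <= s ^ 2 * nrm2 m x). enough (- s ^ 2 * nrm2 m x <= - F x) by lra.
  revert x. apply homogeneous_lower_bound; [|intros t y|exact Hunit].
  - intros y y' Hyy'. unfold F. f_equal. apply batch_sum_ext. intros j.
    now rewrite (rowdot_ext m A j y y').
  - assert (HF : F (fun l => t * y l) = t ^ 2 * F y).
    { unfold F. rewrite <- batch_sum_mult_l. apply batch_sum_ext. intros j.
      rewrite rowdot_scal. ring. }
    cbv beta. rewrite HF. ring.
Qed.

(* Cauchy-Schwarz on ||w||^2 = <u, A_tau w> for w = A_tau^T u. *)
Lemma block_adjoint_bound n m A g i s u :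
  (forall x, batch_sum n g i (fun j => rowdot m A j x ^ 2) <= s ^ 2 * nrm2 m x) ->
  nrm2 m (fun l => batch_sum n g i (fun j => u j * A j l))
  <= s ^ 2 * batch_sum n g i (fun j => u j ^ 2).
Proof.
  intros Hblock.
  set (w := fun l => batch_sum n g i (fun j => u j * A j l)).
  set (U := batch_sum n g i (fun j => u j ^ 2)).
  assert (HN : nrm2 m w = batch_sum n g i (fun j => u j * rowdot m A j w))
    by (rewrite <- batch_adjoint; apply rsum_ext; intros; unfold w; ring).
  assert (HCS : nrm2 m w ^ 2 <= U * (s ^ 2 * nrm2 m w)).
  { rewrite HN at 1. eapply Rle_trans; [apply batch_sum_cauchy_schwarz|].
    apply Rmult_le_compat_l; [apply batch_sum_nonneg; intros; apply pow2_ge_0|apply Hblock]. }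
  assert (HU : 0 <= U) by (apply batch_sum_nonneg; intros; apply pow2_ge_0).
  destruct (Rle_lt_or_eq_dec 0 _ (nrm2_nonneg m w)) as [Hpos|<-].
  - apply (Rmult_le_reg_r (nrm2 m w)); [exact Hpos|]. nra.
  - pose proof (pow2_ge_0 s). nra.
Qed.

Lemma sq_sigma_min_le_sum_sq_block_norms n m d A g nrm s2 :
  (0 < m)%nat -> (forall j, (j < n)%nat -> (g j < d)%nat) ->
  (forall x, s2 * nrm2 m x <= nrm2 n (fun j => rowdot m A j x)) ->
  (forall i, (i < d)%nat -> forall x,
     batch_sum n g i (fun j => rowdot m A j x ^ 2) <= nrm i ^ 2 * nrm2 m x) ->
  s2 <= rsum d (fun i => nrm i ^ 2).
Proof.
  intros Hm Hg Hray Hblock.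
  pose proof (nrm2_coord_vec m 0 Hm) as Hunit.
  assert (Hsum : nrm2 n (fun j => rowdot m A j (coord_vec 0))
                 <= rsum d (fun i => nrm i ^ 2 * nrm2 m (coord_vec 0))).
  { unfold nrm2 at 1. rewrite <- (rsum_batch_sum n d g _ Hg).
    apply rsum_le. intros i Hi. now apply Hblock. }
  specialize (Hray (coord_vec 0)). rewrite Hunit in Hray, Hsum.
  rewrite (rsum_ext d _ (fun i => nrm i ^ 2)) in Hsum by (intros; ring). lra.
Qed.

Lemma mixed_weights_facts n d bsz nrm S :
  (0 < bsz)%nat -> n = (d * bsz)%nat -> S = rsum d (fun i => nrm i ^ 2) -> 0 < S ->
  rsum d (fun i => INR bsz / (2 * INR n) + / 2 * (nrm i ^ 2 / S)) = 1 /\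
  forall i, 0 < INR bsz / (2 * INR n) + / 2 * (nrm i ^ 2 / S) /\
    nrm i ^ 2 <= 2 * S * (INR bsz / (2 * INR n) + / 2 * (nrm i ^ 2 / S)) /\
    1 <= 2 * INR d * (INR bsz / (2 * INR n) + / 2 * (nrm i ^ 2 / S)).
Proof.
  intros Hb Hn HS HSpos.
  assert (Hd : (0 < d)%nat) by (destruct d; [subst S; simpl in HSpos; lra|lia]).
  assert (HdR : 0 < INR d) by (apply lt_0_INR; exact Hd).
  assert (Hunif : INR bsz / (2 * INR n) = / (2 * INR d)).
  { rewrite Hn, mult_INR. field. split; apply not_0_INR; lia. }
  rewrite Hunif. split.
  - rewrite rsum_plus, rsum_const.
    rewrite (rsum_ext d _ (fun i => / (2 * S) * nrm i ^ 2)) by (intros; field; lra).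
    rewrite rsum_mult_l, <- HS. field. lra.
  - intros i. pose proof (pow2_ge_0 (nrm i)).
    assert (0 <= nrm i ^ 2 / S) by (apply Rmult_le_pos; [lra|apply Rlt_le, Rinv_0_lt_compat; lra]).
    assert (0 < / (2 * INR d)) by (apply Rinv_0_lt_compat; lra).
    split; [lra|split].
    + replace (2 * S * (/ (2 * INR d) + / 2 * (nrm i ^ 2 / S))) with (S / INR d + nrm i ^ 2)
        by (field; lra).
      assert (0 <= S / INR d) by (apply Rmult_le_pos; [lra|apply Rlt_le, Rinv_0_lt_compat; lra]).
      lra.
    + replace (2 * INR d * (/ (2 * INR d) + / 2 * (nrm i ^ 2 / S)))
        with (1 + INR d * (nrm i ^ 2 / S)) by (field; lra).
      assert (0 <= INR d * (nrm i ^ 2 / S)) by (apply Rmult_le_pos; lra). lra.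
Qed.

(** * One step of the batched iteration *)

Definition batch_grad n m A bv g i x : nat -> R :=
  fun l => batch_sum n g i (fun j => (rowdot m A j x - bv j) * A j l).

Section OneStep.

Variables (n m d : nat) (A : nat -> nat -> R) (bv xs : nat -> R) (g : nat -> nat)
  (nrm p : nat -> R) (gamma S sig2 : R).

Hypothesis Hg : forall j, (j < n)%nat -> (g j < d)%nat.
Hypothesis Hnormal :
  forall l, (l < m)%nat -> rsum n (fun j => (rowdot m A j xs - bv j) * A j l) = 0.
Hypothesis Hblock : forall i, (i < d)%nat -> forall x,
  batch_sum n g i (fun j => rowdot m A j x ^ 2) <= nrm i ^ 2 * nrm2 m x.
Hypothesis Hweights : forall i, (i < d)%nat ->
  0 < p i /\ nrm i ^ 2 <= 2 * S * p i /\ 1 <= 2 * INR d * p i.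
Hypothesis Hpsum : rsum d p = 1.
Hypothesis Hray : forall x, sig2 * nrm2 m x <= nrm2 n (fun j => rowdot m A j x).
Hypothesis Hgamma : 0 <= gamma.
Hypothesis HgS : 2 * gamma * S <= 1.

Lemma batch_grad_sqnorm_le i x : (i < d)%nat ->
  nrm2 m (batch_grad n m A bv g i x)
  <= 2 * nrm i ^ 2 * (batch_sum n g i (fun j => rowdot m A j (fun l => x l - xs l) ^ 2)
                      + batch_sum n g i (fun j => (rowdot m A j xs - bv j) ^ 2)).
Proof.
  intros Hi.
  rewrite (nrm2_ext m _ (fun l =>
      batch_sum n g i (fun j => rowdot m A j (fun l => x l - xs l) * A j l)
      + batch_sum n g i (fun j => (rowdot m A j xs - bv j) * A j l))).
  2:{ intros l _. unfold batch_grad. rewrite <- batch_sum_plus. apply batch_sum_ext. intros j.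
      rewrite rowdot_sub. ring. }
  eapply Rle_trans; [apply nrm2_add_le|].
  pose proof (block_adjoint_bound n m A g i (nrm i)
                (fun j => rowdot m A j (fun l => x l - xs l)) (Hblock i Hi)).
  pose proof (block_adjoint_bound n m A g i (nrm i)
                (fun j => rowdot m A j xs - bv j) (Hblock i Hi)).
  lra.
Qed.

Lemma weighted_step_le i x : (i < d)%nat ->
  p i * nrm2 m (fun l => sgd_step n m A bv g p gamma i x l - xs l)
  <= p i * nrm2 m (fun l => x l - xs l)
     - 2 * gamma * rsum m (fun l => (x l - xs l) * batch_grad n m A bv g i x l)
     + 4 * gamma ^ 2
       * (S * batch_sum n g i (fun j => rowdot m A j (fun l => x l - xs l) ^ 2)
          + INR d * (nrm i ^ 2 * batch_sum n g i (fun j => (rowdot m A j xs - bv j) ^ 2))).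
Proof.
  intros Hi. destruct (Hweights i Hi) as [Hp0 [HpS Hpd]].
  set (e := fun l => x l - xs l). set (G := batch_grad n m A bv g i x).
  set (Be := batch_sum n g i (fun j => rowdot m A j e ^ 2)).
  set (Br := batch_sum n g i (fun j => (rowdot m A j xs - bv j) ^ 2)).
  assert (HBe : 0 <= Be) by (apply batch_sum_nonneg; intros; apply pow2_ge_0).
  assert (HBr : 0 <= Br) by (apply batch_sum_nonneg; intros; apply pow2_ge_0).
  rewrite (nrm2_ext m _ (fun l => e l - gamma / p i * G l))
    by (intros; unfold sgd_step, e, G, batch_grad, batch_sum; ring).
  rewrite nrm2_sub_scal.
  assert (HG : nrm2 m G <= 4 * p i * (S * Be + INR d * (nrm i ^ 2 * Br))).
  { eapply Rle_trans; [apply batch_grad_sqnorm_le; exact Hi|]. fold e Be Br.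
    assert (nrm i ^ 2 * Be <= 2 * S * p i * Be) by (apply Rmult_le_compat_r; lra).
    assert (nrm i ^ 2 * Br <= 2 * INR d * p i * (nrm i ^ 2 * Br))
      by (pose proof (pow2_ge_0 (nrm i)); rewrite <- (Rmult_1_l (nrm i ^ 2 * Br)) at 1;
          apply Rmult_le_compat_r; [apply Rmult_le_pos|]; lra).
    lra. }
  assert (HGp : nrm2 m G / p i <= 4 * (S * Be + INR d * (nrm i ^ 2 * Br))).
  { apply (Rmult_le_reg_r (p i)); [lra|].
    replace (nrm2 m G / p i * p i) with (nrm2 m G) by (field; lra). lra. }
  replace (p i * (nrm2 m e - 2 * (gamma / p i) * rsum m (fun l => e l * G l)
                  + (gamma / p i) ^ 2 * nrm2 m G))
    with (p i * nrm2 m e - 2 * gamma * rsum m (fun l => e l * G l) + gamma ^ 2 * (nrm2 m G / p i))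
    by (field; lra).
  apply (Rmult_le_compat_l (gamma ^ 2)) in HGp; [|apply pow2_ge_0].
  unfold e, G, Be, Br in *. cbv beta in *. lra.
Qed.

Lemma rsum_inner_batch_grad x :
  rsum d (fun i => rsum m (fun l => (x l - xs l) * batch_grad n m A bv g i x l))
  = nrm2 n (fun j => rowdot m A j (fun l => x l - xs l)).
Proof.
  set (e := fun l => x l - xs l).
  transitivity (rsum d (fun i =>
    batch_sum n g i (fun j => (rowdot m A j x - bv j) * rowdot m A j e))).
  { apply rsum_ext. intros. apply (batch_adjoint n m A g i (fun j => rowdot m A j x - bv j) e). }
  rewrite rsum_batch_sum by exact Hg.
  transitivity (nrm2 n (fun j => rowdot m A j e)
                + rsum n (fun j => (rowdot m A j xs - bv j) * rowdot m A j e)).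
  { unfold nrm2. rewrite <- rsum_plus. apply rsum_ext. intros. unfold e. rewrite rowdot_sub. ring. }
  (* the residual at the least-squares solution is orthogonal to the range of A *)
  rewrite <- rsum_adjoint, rsum_zero; [ring|].
  intros l Hl. rewrite Hnormal by exact Hl. ring.
Qed.

Lemma sgd_step_contraction x :
  rsum d (fun i => p i * nrm2 m (fun l => sgd_step n m A bv g p gamma i x l - xs l))
  <= (1 - 2 * gamma * sig2 * (1 - 2 * gamma * S)) * nrm2 m (fun l => x l - xs l)
     + 4 * gamma ^ 2 * INR d
       * rsum d (fun i => nrm i ^ 2 * batch_sum n g i (fun j => (rowdot m A j xs - bv j) ^ 2)).
Proof.
  eapply Rle_trans; [apply rsum_le; intros i Hi; apply weighted_step_le; exact Hi|].
  rewrite (rsum_ext d _ (fun i =>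
      p i * nrm2 m (fun l => x l - xs l)
      + (-2 * gamma) * rsum m (fun l => (x l - xs l) * batch_grad n m A bv g i x l)
      + (4 * gamma ^ 2 * S) * batch_sum n g i (fun j => rowdot m A j (fun l => x l - xs l) ^ 2)
      + (4 * gamma ^ 2 * INR d)
        * (nrm i ^ 2 * batch_sum n g i (fun j => (rowdot m A j xs - bv j) ^ 2))))
    by (intros; ring).
  rewrite !rsum_plus, !rsum_mult_l, rsum_mult_r, Hpsum, rsum_inner_batch_grad,
    rsum_batch_sum by exact Hg.
  specialize (Hray (fun l => x l - xs l)).
  assert (0 <= 2 * gamma * (1 - 2 * gamma * S)) by (apply Rmult_le_pos; lra).
  change (rsum n (fun j => rowdot m A j (fun l => x l - xs l) ^ 2))
    with (nrm2 n (fun j => rowdot m A j (fun l => x l - xs l))).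
  nra.
Qed.

End OneStep.

Lemma expect_ext d p k F G : (forall s, F s = G s) -> expect d p k F = expect d p k G.
Proof.
  revert F G. induction k as [|k IH]; intros F G H; simpl; [apply H|].
  apply rsum_ext. intros i _. f_equal. apply IH. intros; apply H.
Qed.

Lemma sgd_iter_scons n m A bv g p gamma x0 i s k :
  sgd_iter n m A bv g p gamma x0 (scons i s) (S k)
  = sgd_iter n m A bv g p gamma (sgd_step n m A bv g p gamma i x0) s k.
Proof. induction k as [|k IH]; [reflexivity|]. simpl in *. now rewrite IH. Qed.

Lemma expect_sgd_iter_le n m d A bv xs g p gamma rho c Rlim :
  (forall i, (i < d)%nat -> 0 <= p i) -> rsum d p = 1 ->
  0 <= rho -> c <= (1 - rho) * Rlim ->
  (forall x, rsum d (fun i => p i * nrm2 m (fun l => sgd_step n m A bv g p gamma i x l - xs l))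
             <= rho * nrm2 m (fun l => x l - xs l) + c) ->
  forall k x0, expect d p k (fun s => nrm2 m (fun l => sgd_iter n m A bv g p gamma x0 s k l - xs l))
               <= rho ^ k * (nrm2 m (fun l => x0 l - xs l) - Rlim) + Rlim.
Proof.
  intros Hp Hpsum Hrho Hc Hstep k. induction k as [|k IH]; intros x0; [simpl; lra|].
  (* condition on the first batch index *)
  cbn [expect].
  eapply Rle_trans.
  { apply rsum_le. intros i Hi.
    rewrite (expect_ext d p k _ (fun s => nrm2 m (fun l =>
       sgd_iter n m A bv g p gamma (sgd_step n m A bv g p gamma i x0) s k l - xs l)))
      by (intros s; now rewrite sgd_iter_scons).
    apply Rmult_le_compat_l; [now apply Hp|]. apply IH. }
  rewrite (rsum_ext d _ (fun i =>
      rho ^ k * (p i * nrm2 m (fun l => sgd_step n m A bv g p gamma i x0 l - xs l))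
      + (Rlim - rho ^ k * Rlim) * p i)) by (intros; ring).
  rewrite rsum_plus, !rsum_mult_l, Hpsum.
  specialize (Hstep x0). pose proof (pow_le rho k Hrho).
  apply (Rmult_le_compat_l (rho ^ k)) in Hstep; [|assumption].
  assert (rho ^ k * c <= rho ^ k * ((1 - rho) * Rlim)) by (apply Rmult_le_compat_l; assumption).
  simpl. nra.
Qed.

(** * Step size and iteration count *)

Lemma ceilR_ge z : z <= INR (Z.to_nat (ceilR z)).
Proof.
  unfold ceilR. destruct (base_Int_part (- z)) as [Hle _].
  destruct (Z_lt_le_dec (- Int_part (- z)) 0) as [Hneg|Hnonneg].
  - apply IZR_lt in Hneg. rewrite opp_IZR in Hneg.
    pose proof (pos_INR (Z.to_nat (- Int_part (- z)))).
    lra.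
  - rewrite INR_IZR_INZ, Z2Nat.id, opp_IZR by exact Hnonneg. lra.
Qed.

Lemma exp_mult_INR k a : exp a ^ k = exp (INR k * a).
Proof.
  induction k as [|k IH]; [simpl; now rewrite Rmult_0_l, exp_0|].
  rewrite <- tech_pow_Rmult, IH, S_INR, <- exp_plus. f_equal. ring.
Qed.

Lemma pow_contraction_le rho a e0 t k :
  0 <= a -> 0 <= rho <= 1 - a -> 0 < t -> 0 <= e0 -> ln (e0 / t) <= INR k * a ->
  rho ^ k * e0 <= t.
Proof.
  intros Ha Hrho Ht He0 Hk.
  assert (Hpow : rho ^ k <= exp (- (INR k * a))).
  { replace (- (INR k * a)) with (INR k * - a) by ring. rewrite <- exp_mult_INR.
    apply pow_incr. pose proof (exp_ineq1_le (- a)). lra. }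
  destruct (Rle_or_lt e0 t) as [Hsmall|Hbig].
  - assert (rho ^ k <= 1) by (rewrite <- (pow1 k); apply pow_incr; lra).
    pose proof (pow_le rho k (proj1 Hrho)). nra.
  - assert (Hexp : exp (- (INR k * a)) <= t / e0).
    { replace (t / e0) with (exp (- ln (e0 / t)))
        by (rewrite exp_Ropp, exp_ln by (apply Rdiv_lt_0_compat; lra); field; lra).
      destruct (Rle_lt_or_eq_dec (- (INR k * a)) (- ln (e0 / t))) as [Hlt|Heq];
        [lra| |rewrite Heq; lra].
      now apply Rlt_le, exp_increasing. }
    apply (Rmult_le_compat_r e0) in Hpow; [|exact He0].
    apply (Rmult_le_compat_r e0) in Hexp; [|exact He0].
    replace (t / e0 * e0) with t in Hexp by (field; lra). lra.
Qed.

Section StepSize.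

Variables (eps S sigma D W : R).
Hypotheses (Heps : 0 < eps) (Hsigma : 0 < sigma) (HS : sigma ^ 2 <= S)
  (HD : 0 <= D) (HW : 0 <= W).

Let Q := D * / sigma ^ 2 * W.
Let gamma := / 4 * eps / (eps * S + Q).
Let rho := 1 - 2 * gamma * sigma ^ 2 * (1 - 2 * gamma * S).

Let Hsig2 : 0 < sigma ^ 2. Proof. now apply pow_lt. Qed.

Let HQ : 0 <= Q.
Proof.
  apply Rmult_le_pos; [apply Rmult_le_pos|exact HW].
  - exact HD.
  - apply Rlt_le, Rinv_0_lt_compat, Hsig2.
Qed.

Let Hden : 0 < eps * S + Q.
Proof.
  pose proof HQ. pose proof Hsig2. pose proof (Rmult_lt_0_compat eps S Heps ltac:(lra)). lra.
Qed.

Let Hchoice : 4 * gamma * (eps * S + Q) = eps.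
Proof. pose proof Hden. unfold gamma, Rdiv. rewrite !Rmult_assoc, Rinv_l by lra. field. Qed.

Lemma step_size_pos : 0 < gamma.
Proof. pose proof Hden. unfold gamma. apply Rdiv_lt_0_compat; lra. Qed.

Lemma step_size_le : 4 * gamma * S <= 1.
Proof.
  pose proof Hchoice. pose proof HQ. pose proof step_size_pos.
  apply (Rmult_le_reg_l eps); [exact Heps|]. nra.
Qed.

Lemma contraction_factor_bounds : 0 <= rho <= 1 - gamma * sigma ^ 2.
Proof.
  pose proof step_size_pos. pose proof step_size_le. pose proof Hsig2. unfold rho.
  assert (0 <= gamma * sigma ^ 2) by (apply Rmult_le_pos; lra).
  assert (gamma * sigma ^ 2 <= 1 / 4) by nra.
  split; nra.
Qed.

Lemma noise_le_contraction_gap : 4 * gamma ^ 2 * D * W <= (1 - rho) * (eps / 2).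
Proof.
  pose proof step_size_pos. pose proof Hchoice. pose proof HQ. pose proof Hsig2.
  replace (4 * gamma ^ 2 * D * W) with (gamma * sigma ^ 2 * (4 * gamma * Q))
    by (unfold Q; field; lra).
  replace ((1 - rho) * (eps / 2)) with (gamma * sigma ^ 2 * ((1 - 2 * gamma * S) * eps))
    by (unfold rho; field).
  apply Rmult_le_compat_l; [apply Rmult_le_pos; lra|].
  assert (0 <= gamma * S * eps) by (apply Rmult_le_pos; [apply Rmult_le_pos|]; lra).
  nra.
Qed.

Lemma iteration_count_rate L k :
  4 * L * (/ sigma ^ 2 * S + D * / sigma ^ 4 * W / eps) <= INR k ->
  L <= INR k * (gamma * sigma ^ 2).
Proof.
  intros Hk. pose proof step_size_pos. pose proof Hchoice. pose proof Hsig2.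
  replace (/ sigma ^ 2 * S + D * / sigma ^ 4 * W / eps) with ((eps * S + Q) / (sigma ^ 2 * eps))
    in Hk by (unfold Q; field; lra).
  apply (Rmult_le_compat_r (gamma * sigma ^ 2)) in Hk; [|apply Rmult_le_pos; lra].
  replace (4 * L * ((eps * S + Q) / (sigma ^ 2 * eps)) * (gamma * sigma ^ 2))
    with (L * (4 * gamma * (eps * S + Q)) / eps) in Hk by (field; lra).
  rewrite Hchoice in Hk. replace (L * eps / eps) with L in Hk by (field; lra). exact Hk.
Qed.

Lemma sgd_error_le e0 k : 0 <= e0 ->
  4 * ln (2 * e0 / eps) * (/ sigma ^ 2 * S + D * / sigma ^ 4 * W / eps) <= INR k ->
  rho ^ k * (e0 - eps / 2) + eps / 2 <= eps.
Proof.
  intros He0 Hk. pose proof step_size_pos. pose proof contraction_factor_bounds. pose proof Hsig2.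
  assert (rho ^ k * e0 <= eps / 2).
  { apply (pow_contraction_le rho (gamma * sigma ^ 2));
      [apply Rmult_le_pos; lra|lra|lra|exact He0|].
    replace (e0 / (eps / 2)) with (2 * e0 / eps) by (field; lra).
    now apply iteration_count_rate. }
  pose proof (pow_le rho k (proj1 H0)). nra.
Qed.

End StepSize.


Theorem corollary3p1
  (n m d bsz : nat) (A : nat -> nat -> R) (bv : nat -> R) (xs : nat -> R)
  (g : nat -> nat) (nrm : nat -> R) (sigma : R)
  (eps : R) (x0 : nat -> R)
  (HA : full_column_rank n m A)
  (Hxs : is_lsq_minimizer n m A bv xs)
  (Hb : (0 < bsz)%nat)
  (Hn : n = (d * bsz)%nat)
  (Hg : is_batch_partition n d bsz g)
  (Hnrm : forall i, (i < d)%nat -> is_block_spectral_norm n m A g i (nrm i))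
  (Hsig : is_sigma_min n m A sigma)
  (Heps : 0 < eps) :
  let S := rsum d (fun i => nrm i ^ 2) in
  let res := fun i => rsum n (fun j => if Nat.eqb (g j) i
                                       then (rowdot m A j xs - bv j) ^ 2 else 0) in
  let W := rsum d (fun i => nrm i ^ 2 * res i) in
  let p := fun i => INR bsz / (2 * INR n) + / 2 * (nrm i ^ 2 / S) in
  let gamma := (/ 4 * eps) / (eps * S + INR d * / sigma ^ 2 * W) in
  let eps0 := nrm2 m (fun l => x0 l - xs l) in
  let k := Z.to_nat (ceilR (4 * ln (2 * eps0 / eps) *
              (/ sigma ^ 2 * S + INR d * / sigma ^ 4 * W / eps))) in
  expect d p k (fun s => nrm2 m (fun l => sgd_iter n m A bv g p gamma x0 s k l - xs l))
    <= eps.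
Proof.
  intros S res W p gamma eps0 k.
  destruct (sigma_min_rayleigh n m A sigma Hsig) as [Hm Hray].
  pose proof (sigma_min_pos n m A sigma HA Hsig) as Hsigma.
  destruct Hg as [Hg _].
  assert (Hblock : forall i, (i < d)%nat -> forall x,
            batch_sum n g i (fun j => rowdot m A j x ^ 2) <= nrm i ^ 2 * nrm2 m x)
    by (intros i Hi; exact (block_spectral_norm_bound n m A g i (nrm i) Hm (Hnrm i Hi))).
  assert (HsS : sigma ^ 2 <= S)
    by exact (sq_sigma_min_le_sum_sq_block_norms n m d A g nrm _ Hm Hg Hray Hblock).
  destruct (mixed_weights_facts n d bsz nrm S Hb Hn eq_refl
              (Rlt_le_trans _ _ _ (pow_lt sigma 2 Hsigma) HsS)) as [Hpsum Hp].
  assert (HW : 0 <= W)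
    by (apply rsum_nonneg; intros; apply Rmult_le_pos;
        [apply pow2_ge_0|apply batch_sum_nonneg; intros; apply pow2_ge_0]).
  assert (Hgamma : 0 < gamma)
    by exact (step_size_pos eps S sigma (INR d) W Heps Hsigma HsS (pos_INR d) HW).
  assert (HgS : 4 * gamma * S <= 1)
    by exact (step_size_le eps S sigma (INR d) W Heps Hsigma HsS (pos_INR d) HW).
  destruct (contraction_factor_bounds eps S sigma (INR d) W Heps Hsigma HsS (pos_INR d) HW)
    as [Hrho _].
  eapply Rle_trans.
  - apply (expect_sgd_iter_le n m d A bv xs g p gamma _ (4 * gamma ^ 2 * INR d * W) (eps / 2)
             (fun i _ => Rlt_le _ _ (proj1 (Hp i))) Hpsum Hrho
             (noise_le_contraction_gap eps S sigma (INR d) W Heps Hsigma HsS (pos_INR d) HW)).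
    intros x. apply (sgd_step_contraction n m d A bv xs g nrm p gamma S (sigma ^ 2));
      [exact Hg|exact (lsq_normal_equations n m A bv xs Hxs)|exact Hblock|
       intros i _; exact (Hp i)|exact Hpsum|exact Hray|lra|lra].
  - apply (sgd_error_le eps S sigma (INR d) W Heps Hsigma HsS (pos_INR d) HW);
      [apply nrm2_nonneg|apply ceilR_ge].
Qed.
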